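(* Let $E:[0,\infty)\times\mathbb{R}^2\to\mathbb{R}^2$ and $b:[0,\infty)\times\mathbb{R}^2\to\mathbb{R}$ be continuous with $b$ nowhere vanishing, $B=b\,e_3$, and let $\gamma=1-1/\sqrt2$. Fix $\Delta t>0$, $T>0$, $t^n=n\Delta t$, $N_T=\lfloor T/\Delta t\rfloor$. For each $\varepsilon>0$ let $(x^n_\varepsilon,v^n_\varepsilon)_{0\le n\le N_T}$ be generated (dropping the index $\varepsilon$ inside stages) by: given $(x^n,v^n)$, $$x^{(1)}=x^n+\frac{\gamma\Delta t}{\varepsilon}v^{(1)},\quad v^{(1)}=v^n+\frac{\gamma\Delta t}{\varepsilon}F^{(1)},\quad F^{(1)}=\frac{v^{(1)}}{\varepsilon}\wedge B(t^n,x^n)+E(t^n,x^n);$$ with $\hat t^{(1)}=t^n+\frac{\Delta t}{2\gamma}$ and $\hat x^{(1)}=x^n+\frac{\Delta t}{2\gamma\varepsilon}v^{(1)}$, $$x^{(2)}=x^n+\frac{(1-\gamma)\Delta t}{\varepsilon}v^{(1)}+\frac{\gamma\Delta t}{\varepsilon}v^{(2)},\quad v^{(2)}=v^n+\frac{(1-\gamma)\Delta t}{\varepsilon}F^{(1)}+\frac{\gamma\Delta t}{\varepsilon}F^{(2)},$$ $$F^{(2)}=\frac{v^{(2)}}{\varepsilon}\wedge B(\hat t^{(1)},\hat x^{(1)})+E(\hat t^{(1)},\hat x^{(1)}),$$ and $x^{n+1}=x^{(2)}$, $v^{n+1}=v^{(2)}$. Assume that for every $1\le n\le N_T$ the family $(x^n_\varepsilon,\varepsilon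 v^n_\varepsilon)_{\varepsilon>0}$ is bounded uniformly in $\varepsilon$ and that $(x^0_\varepsilon,\varepsilon v^0_\varepsilon)\to(y^0,0)$ as $\varepsilon\to0$. Then for every $0\le n\le N_T$, $x^n_\varepsilon\to y^n$ as $\varepsilon\to0$, where $(y^n)$ starts from $y^0$ and satisfies $$U^n=U(t^n,y^n),\quad \hat y^{(1)}=y^n+\frac{\Delta t}{2\gamma}U^n,\quad U^{(1)}=U(\hat t^{(1)},\hat y^{(1)}),\quad y^{n+1}=y^n+(1-\gamma)\Delta t\,U^n+\gamma\Delta t\,U^{(1)}.$$
   Context: Vectors of $\mathbb{R}^2$ are identified with vectors $(w_1,w_2,0)$ of $\mathbb{R}^3$, $e_3=(0,0,1)$, and $\wedge$ is the cross product; thus for $w\in\mathbb{R}^2$ and $B=b\,e_3$, $w\wedge B=b\,(w_2,-w_1)\in\mathbb{R}^2$. The guiding-center drift is $U(t,x)=\dfrac{E(t,x)\wedge B(t,x)}{\|B(t,x)\|^2}$. *)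

From Stdlib Require Import Reals Lra ZArith.
Open Scope R_scope.

Definition vec := (R * R)%type.
Definition vadd (u w : vec) : vec := (fst u + fst w, snd u + snd w).
Definition vsub (u w : vec) : vec := (fst u - fst w, snd u - snd w).
Definition vscale (c : R) (u : vec) : vec := (c * fst u, c * snd u).
Definition vnorm (u : vec) : R := sqrt (fst u ^ 2 + snd u ^ 2).

(* w /\ (b e3) = b (w2, -w1) *)
Definition wedgeB (w : vec) (b : R) : vec := (b * snd w, - (b * fst w)).

(* Guiding-center drift U = (E /\ B) / ||B||^2 with B = b e3, ||B||^2 = b^2 *)
Definition Udrift (E : R -> vec -> vec) (b : R -> vec -> R) (t : R) (x : vec) : vec :=
  vscale (/ (b t x ^ 2)) (wedgeB (E t x) (b t x)).

Definition gamma : R := 1 - 1 / sqrt 2.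

Definition cont_vec (f : R -> vec -> vec) : Prop :=
  forall t x, 0 <= t -> forall e, 0 < e -> exists d, 0 < d /\
    forall t' x', 0 <= t' -> Rabs (t' - t) < d -> vnorm (vsub x' x) < d ->
      vnorm (vsub (f t' x') (f t x)) < e.
Definition cont_scal (f : R -> vec -> R) : Prop :=
  forall t x, 0 <= t -> forall e, 0 < e -> exists d, 0 < d /\
    forall t' x', 0 <= t' -> Rabs (t' - t) < d -> vnorm (vsub x' x) < d ->
      Rabs (f t' x' - f t x) < e.

Definition conv0 (f : R -> vec) (L : vec) : Prop :=
  forall e, 0 < e -> exists d, 0 < d /\
    forall eps, 0 < eps -> eps < d -> vnorm (vsub (f eps) L) < e.

Definition NT (T dt : R) : nat := Z.to_nat (Int_part (T / dt)).

Fixpoint yseq (E : R -> vec -> vec) (b : R -> vec -> R) (dt : R) (y0 : vec) (n : nat)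
  : vec :=
  match n with
  | O => y0
  | S m =>
      let tm := INR m * dt in
      let ym := yseq E b dt y0 m in
      let Um := Udrift E b tm ym in
      let that1 := tm + dt / (2 * gamma) in
      let hy1 := vadd ym (vscale (dt / (2 * gamma)) Um) in
      let U1 := Udrift E b that1 hy1 in
      vadd ym (vadd (vscale ((1 - gamma) * dt) Um) (vscale (gamma * dt) U1))
  end.

Definition scheme_step (E : R -> vec -> vec) (b : R -> vec -> R) (dt eps tn : R)
  (xn vn v1 v2 xn1 vn1 : vec) : Prop :=
  let F1 := vadd (wedgeB (vscale (/ eps) v1) (b tn xn)) (E tn xn) in
  let that1 := tn + dt / (2 * gamma) in
  let hx1 := vadd xn (vscale (dt / (2 * gamma * eps)) v1) in
  let F2 := vadd (wedgeB (vscale (/ eps) v2) (b that1 hx1)) (E that1 hx1) in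
  v1 = vadd vn (vscale (gamma * dt / eps) F1) /\
  v2 = vadd vn (vadd (vscale ((1 - gamma) * dt / eps) F1) (vscale (gamma * dt / eps) F2)) /\
  xn1 = vadd xn (vadd (vscale ((1 - gamma) * dt / eps) v1) (vscale (gamma * dt / eps) v2)) /\
  vn1 = v2.

From Stdlib Require Import Reals Lra Lia ClassicalEpsilon.
From Coquelicot Require Import Coquelicot.
Open Scope R_scope.

(* Rescale the stage velocities as w = v / eps. Each implicit stage then reads
   eps^2 w = s + c (w /\ B + E) with s -> 0: a 2x2 linear system with determinant
   eps^4 + c^2 b^2, which stays away from 0 because b does not vanish. Solving it
   explicitly shows w -> (E /\ B) / |B|^2 = U. Substituting these limits in the update of x
   gives one step of the limit scheme, and eps v^(n+1) = eps^2 w^(2) -> 0 propagates the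
   induction. *)

Definition lim0 (f : R -> R) (l : R) : Prop := filterlim f (at_right 0) (locally l).

Lemma lim0_spec (f : R -> R) (l : R) :
  lim0 f l <-> forall e, 0 < e -> exists d, 0 < d /\
    forall eps, 0 < eps -> eps < d -> Rabs (f eps - l) < e.
Proof.
  split.
  - intros Hf e He.
    destruct (proj1 (filterlim_locally f l) Hf (mkposreal e He)) as [[d Hd] Hball].
    exists d; split; [exact Hd |].
    intros eps Heps Hlt; apply Hball; [| exact Heps].
    change (Rabs (eps - 0) < d); rewrite Rminus_0_r, Rabs_right; lra.
  - intros H; apply filterlim_locally; intros [e He].
    destruct (H e He) as [d [Hd Hf]].
    exists (mkposreal d Hd); intros eps Hball Heps.
    change (Rabs (eps - 0) < d) in Hball; rewrite Rminus_0_r in Hball.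
    apply Hf; [exact Heps | apply Rabs_def2 in Hball; lra].
Qed.

Lemma lim0_const (c : R) : lim0 (fun _ => c) c.
Proof. apply filterlim_const. Qed.

Lemma lim0_id : lim0 (fun eps => eps) 0.
Proof.
  apply lim0_spec; intros e He; exists e; split; [exact He |].
  intros eps Heps Hlt; rewrite Rminus_0_r, Rabs_right; lra.
Qed.

Lemma lim0_plus (f g : R -> R) (a b : R) :
  lim0 f a -> lim0 g b -> lim0 (fun eps => f eps + g eps) (a + b).
Proof. intros Hf Hg; exact (filterlim_comp_2 _ _ Rplus Hf Hg (@filterlim_plus _ R_NormedModule a b)). Qed.

Lemma lim0_mult (f g : R -> R) (a b : R) :
  lim0 f a -> lim0 g b -> lim0 (fun eps => f eps * g eps) (a * b).
Proof. intros Hf Hg; exact (filterlim_comp_2 _ _ Rmult Hf Hg (@filterlim_mult R_AbsRing a b)). Qed.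

Lemma lim0_opp (f : R -> R) (a : R) : lim0 f a -> lim0 (fun eps => - f eps) (- a).
Proof. intros Hf; exact (filterlim_comp _ _ _ f Ropp _ _ _ Hf (@filterlim_opp _ R_NormedModule a)). Qed.

Lemma lim0_inv (f : R -> R) (a : R) : lim0 f a -> a <> 0 -> lim0 (fun eps => / f eps) (/ a).
Proof.
  intros Hf Ha.
  apply (filterlim_comp _ _ _ f Rinv _ _ _ Hf).
  apply (filterlim_Rbar_inv (Finite a)); congruence.
Qed.

Lemma lim0_ext (f g : R -> R) (l : R) :
  (forall eps, 0 < eps -> f eps = g eps) -> lim0 f l -> lim0 g l.
Proof.
  intros Hfg; apply filterlim_ext_loc.
  exists (mkposreal 1 Rlt_0_1); intros eps _ Heps; exact (Hfg eps Heps).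
Qed.

Lemma lim0_eq (f : R -> R) (a b : R) : lim0 f a -> a = b -> lim0 f b.
Proof. now intros Hf <-. Qed.

Ltac lim0_auto :=
  unfold Rdiv, Rminus;
  repeat first [ eassumption | apply lim0_const | apply lim0_id | apply lim0_plus
               | apply lim0_mult | apply lim0_opp | apply lim0_inv ].

Lemma Rabs_fst_le_vnorm (u : vec) : Rabs (fst u) <= vnorm u.
Proof.
  unfold vnorm; rewrite <- sqrt_Rsqr_abs; apply sqrt_le_1_alt.
  unfold Rsqr; simpl; nra.
Qed.

Lemma Rabs_snd_le_vnorm (u : vec) : Rabs (snd u) <= vnorm u.
Proof.
  unfold vnorm; rewrite <- sqrt_Rsqr_abs; apply sqrt_le_1_alt.
  unfold Rsqr; simpl; nra.
Qed.

Lemma vnorm_le_Rabs_fst_snd (u : vec) : vnorm u <= Rabs (fst u) + Rabs (snd u).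
Proof.
  pose proof (Rabs_pos (fst u)); pose proof (Rabs_pos (snd u)).
  unfold vnorm; rewrite <- (sqrt_square (Rabs (fst u) + Rabs (snd u))) by lra.
  apply sqrt_le_1_alt.
  rewrite <- (pow2_abs (fst u)), <- (pow2_abs (snd u)); nra.
Qed.

Lemma conv0_iff (f : R -> vec) (a : vec) :
  conv0 f a <-> lim0 (fun eps => fst (f eps)) (fst a) /\ lim0 (fun eps => snd (f eps)) (snd a).
Proof.
  split.
  - intros Hf; split; apply lim0_spec; intros e He;
      destruct (Hf e He) as [d [Hd Hfd]]; exists d; split; [exact Hd | | exact Hd |];
      intros eps Heps Hlt; eapply Rle_lt_trans; try exact (Hfd eps Heps Hlt).
    + exact (Rabs_fst_le_vnorm (vsub (f eps) a)).
    + exact (Rabs_snd_le_vnorm (vsub (f eps) a)).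
  - intros [H1 H2] e He.
    destruct (proj1 (lim0_spec _ _) H1 (e / 2)) as [d1 [Hd1 Hf1]]; [lra |].
    destruct (proj1 (lim0_spec _ _) H2 (e / 2)) as [d2 [Hd2 Hf2]]; [lra |].
    exists (Rmin d1 d2); split; [now apply Rmin_pos |].
    intros eps Heps Hlt; eapply Rle_lt_trans; [apply vnorm_le_Rabs_fst_snd |].
    pose proof (Rmin_l d1 d2); pose proof (Rmin_r d1 d2).
    specialize (Hf1 eps Heps ltac:(lra)); specialize (Hf2 eps Heps ltac:(lra)).
    simpl; lra.
Qed.

Lemma conv0_ext (f g : R -> vec) (a : vec) :
  (forall eps, 0 < eps -> f eps = g eps) -> conv0 f a -> conv0 g a.
Proof.
  intros Hfg [H1 H2]%conv0_iff; apply conv0_iff; split.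
  - apply (lim0_ext _ _ _ (fun eps Heps => f_equal fst (Hfg eps Heps)) H1).
  - apply (lim0_ext _ _ _ (fun eps Heps => f_equal snd (Hfg eps Heps)) H2).
Qed.

Lemma conv0_eq (f : R -> vec) (a b : vec) : conv0 f a -> a = b -> conv0 f b.
Proof. now intros Hf <-. Qed.

Lemma conv0_vadd (f g : R -> vec) (a b : vec) :
  conv0 f a -> conv0 g b -> conv0 (fun eps => vadd (f eps) (g eps)) (vadd a b).
Proof. intros [? ?]%conv0_iff [? ?]%conv0_iff; apply conv0_iff; simpl; split; lim0_auto. Qed.

Lemma conv0_vscale (k : R -> R) (f : R -> vec) (c : R) (a : vec) :
  lim0 k c -> conv0 f a -> conv0 (fun eps => vscale (k eps) (f eps)) (vscale c a).
Proof. intros ? [? ?]%conv0_iff; apply conv0_iff; simpl; split; lim0_auto. Qed.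

Lemma conv0_wedgeB (f : R -> vec) (bb : R -> R) (a : vec) (b0 : R) :
  conv0 f a -> lim0 bb b0 -> conv0 (fun eps => wedgeB (f eps) (bb eps)) (wedgeB a b0).
Proof. intros [? ?]%conv0_iff ?; apply conv0_iff; simpl; split; lim0_auto. Qed.

Lemma cont_vec_conv0 (E : R -> vec -> vec) (t : R) (X : R -> vec) (y : vec) :
  cont_vec E -> 0 <= t -> conv0 X y -> conv0 (fun eps => E t (X eps)) (E t y).
Proof.
  intros HE Ht HX e He; destruct (HE t y Ht e He) as [d [Hd HEd]].
  destruct (HX d Hd) as [d' [Hd' HXd]]; exists d'; split; [exact Hd' |].
  intros eps Heps Hlt; apply HEd; [exact Ht | | now apply HXd].
  now rewrite Rminus_diag, Rabs_R0.
Qed.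

Lemma cont_scal_lim0 (b : R -> vec -> R) (t : R) (X : R -> vec) (y : vec) :
  cont_scal b -> 0 <= t -> conv0 X y -> lim0 (fun eps => b t (X eps)) (b t y).
Proof.
  intros Hb Ht HX; apply lim0_spec; intros e He; destruct (Hb t y Ht e He) as [d [Hd Hbd]].
  destruct (HX d Hd) as [d' [Hd' HXd]]; exists d'; split; [exact Hd' |].
  intros eps Heps Hlt; apply Hbd; [exact Ht | | now apply HXd].
  now rewrite Rminus_diag, Rabs_R0.
Qed.

Lemma rotation_system_solve (k c beta s1 s2 e1 e2 w1 w2 : R) :
  k * k + c * c * (beta * beta) <> 0 ->
  k * w1 = s1 + c * (beta * w2 + e1) ->
  k * w2 = s2 + c * (- (beta * w1) + e2) ->
  w1 = (k * (s1 + c * e1) + c * beta * (s2 + c * e2)) / (k * k + c * c * (beta * beta)) /\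
  w2 = (k * (s2 + c * e2) - c * beta * (s1 + c * e1)) / (k * k + c * c * (beta * beta)).
Proof.
  intros HD H1 H2.
  assert (R1 : k * w1 - (s1 + c * (beta * w2 + e1)) = 0) by lra.
  assert (R2 : k * w2 - (s2 + c * (- (beta * w1) + e2)) = 0) by lra.
  split; apply (Rmult_eq_reg_r (k * k + c * c * (beta * beta))); try exact HD;
    unfold Rdiv; rewrite (Rmult_assoc _ (/ _)), Rinv_l, Rmult_1_r by exact HD.
  - assert (Hid : w1 * (k * k + c * c * (beta * beta)) - (k * (s1 + c * e1) + c * beta * (s2 + c * e2))
                  = k * (k * w1 - (s1 + c * (beta * w2 + e1)))
                    + c * beta * (k * w2 - (s2 + c * (- (beta * w1) + e2)))) by ring.
    rewrite R1, R2 in Hid; lra.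
  - assert (Hid : w2 * (k * k + c * c * (beta * beta)) - (k * (s2 + c * e2) - c * beta * (s1 + c * e1))
                  = k * (k * w2 - (s2 + c * (- (beta * w1) + e2)))
                    - c * beta * (k * w1 - (s1 + c * (beta * w2 + e1)))) by ring.
    rewrite R1, R2 in Hid; lra.
Qed.

Lemma conv0_stiff_rotation_solution (c b0 : R) (a : vec) (s e w : R -> vec) (bb : R -> R) :
  0 < c -> b0 <> 0 -> conv0 s (0, 0) -> lim0 bb b0 -> conv0 e a ->
  (forall eps, 0 < eps ->
     vscale (eps * eps) (w eps) = vadd (s eps) (vscale c (vadd (wedgeB (w eps) (bb eps)) (e eps)))) ->
  conv0 w (vscale (/ b0 ^ 2) (wedgeB a b0)).
Proof.
  intros Hc Hb0 [Hs1 Hs2]%conv0_iff Hbb [He1 He2]%conv0_iff Hw; simpl in Hs1, Hs2.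
  assert (Hsol : forall eps, 0 < eps ->
    let k := eps * eps in let D := k * k + c * c * (bb eps * bb eps) in
    fst (w eps) = (k * (fst (s eps) + c * fst (e eps))
                   + c * bb eps * (snd (s eps) + c * snd (e eps))) / D /\
    snd (w eps) = (k * (snd (s eps) + c * snd (e eps))
                   - c * bb eps * (fst (s eps) + c * fst (e eps))) / D).
  { intros eps Heps k D.
    assert (HD : D <> 0) by (unfold D, k; assert (0 < eps * eps) by nra; nra).
    pose proof (Hw eps Heps) as Heq.
    apply rotation_system_solve; [exact HD | apply (f_equal fst) in Heq | apply (f_equal snd) in Heq];
      unfold vadd, vscale, wedgeB in Heq; simpl in Heq; unfold k; rewrite Heq; ring. }
  assert (HD0 : 0 * 0 * (0 * 0) + c * c * (b0 * b0) <> 0).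
  { pose proof (Rsqr_pos_lt b0 Hb0); unfold Rsqr in *.
    assert (0 < c * c * (b0 * b0)) by (apply Rmult_lt_0_compat; nra); lra. }
  apply conv0_iff; split; simpl.
  - eapply lim0_ext; [intros eps Heps; symmetry; exact (proj1 (Hsol eps Heps)) |].
    eapply lim0_eq; [lim0_auto | field; split; [exact Hb0 | lra]].
  - eapply lim0_ext; [intros eps Heps; symmetry; exact (proj2 (Hsol eps Heps)) |].
    eapply lim0_eq; [lim0_auto | field; split; [exact Hb0 | lra]].
Qed.

Lemma gamma_pos : 0 < gamma.
Proof.
  unfold gamma.
  assert (Hsqrt2 : 1 < sqrt 2) by (rewrite <- sqrt_1; apply sqrt_lt_1_alt; lra).
  assert (1 / sqrt 2 < 1) by (apply (Rmult_lt_reg_r (sqrt 2)); [lra | field_simplify; lra]).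
  lra.
Qed.

Lemma drift_balance (e : vec) (beta : R) :
  beta <> 0 -> vadd (wedgeB (vscale (/ beta ^ 2) (wedgeB e beta)) beta) e = (0, 0).
Proof. intros Hbeta; unfold vadd, vscale, wedgeB; simpl; f_equal; field; exact Hbeta. Qed.

Lemma stiff_stage_rescale (eps c : R) (v u F : vec) :
  0 < eps -> v = vadd u (vscale (c / eps) F) ->
  vscale (eps * eps) (vscale (/ eps) v) = vadd (vscale eps u) (vscale c F).
Proof. intros Heps ->; unfold vadd, vscale; simpl; f_equal; field; lra. Qed.

Definition drift_step (E : R -> vec -> vec) (b : R -> vec -> R) (dt t : R) (y : vec) : vec :=
  let th := t + dt / (2 * gamma) in
  let U := Udrift E b t y in
  let hy := vadd y (vscale (dt / (2 * gamma)) U) in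
  vadd y (vadd (vscale ((1 - gamma) * dt) U) (vscale (gamma * dt) (Udrift E b th hy))).

Lemma yseq_S (E : R -> vec -> vec) (b : R -> vec -> R) (dt : R) (y0 : vec) (n : nat) :
  yseq E b dt y0 (S n) = drift_step E b dt (INR n * dt) (yseq E b dt y0 n).
Proof. reflexivity. Qed.

Section OneStep.

Variables (E : R -> vec -> vec) (b : R -> vec -> R) (dt tn : R) (y : vec).
Variables (xs vs v1 v2 xs' vs' : R -> vec).

Hypothesis HE : cont_vec E.
Hypothesis Hb : cont_scal b.
Hypothesis Hbnz : forall t x, 0 <= t -> b t x <> 0.
Hypothesis Hdt : 0 < dt.
Hypothesis Htn : 0 <= tn.
Hypothesis Hx : conv0 xs y.
Hypothesis Hv : conv0 (fun eps => vscale eps (vs eps)) (0, 0).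
Hypothesis Hstep : forall eps, 0 < eps ->
  scheme_step E b dt eps tn (xs eps) (vs eps) (v1 eps) (v2 eps) (xs' eps) (vs' eps).

Let th := tn + dt / (2 * gamma).
Let hy := vadd y (vscale (dt / (2 * gamma)) (Udrift E b tn y)).

Let Hgamma_dt : 0 < gamma * dt.
Proof. pose proof gamma_pos; nra. Qed.

Let Hth : 0 <= th.
Proof.
  unfold th; pose proof gamma_pos.
  assert (0 < dt / (2 * gamma)) by (apply Rdiv_lt_0_compat; lra); lra.
Qed.

Lemma stage1_conv0 : conv0 (fun eps => vscale (/ eps) (v1 eps)) (Udrift E b tn y).
Proof.
  apply (conv0_stiff_rotation_solution (gamma * dt) (b tn y) (E tn y)
           (fun eps => vscale eps (vs eps)) (fun eps => E tn (xs eps)) _ (fun eps => b tn (xs eps)));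
    auto using cont_vec_conv0, cont_scal_lim0.
  intros eps Heps; destruct (Hstep eps Heps) as [H1 _].
  apply stiff_stage_rescale; [exact Heps | rewrite H1 at 1; do 3 f_equal; field; lra].
Qed.

Lemma predictor_conv0 :
  conv0 (fun eps => vadd (xs eps) (vscale (dt / (2 * gamma * eps)) (v1 eps))) hy.
Proof.
  pose proof gamma_pos.
  apply (conv0_ext (fun eps => vadd (xs eps) (vscale (dt / (2 * gamma)) (vscale (/ eps) (v1 eps))))).
  - intros eps Heps; unfold vadd, vscale; simpl; f_equal; field; lra.
  - apply conv0_vadd; [exact Hx |].
    apply conv0_vscale; [apply lim0_const | exact stage1_conv0].
Qed.

Lemma stage2_conv0 : conv0 (fun eps => vscale (/ eps) (v2 eps)) (Udrift E b th hy).
Proof.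
  pose proof gamma_pos.
  set (F1 := fun eps => vadd (wedgeB (vscale (/ eps) (v1 eps)) (b tn (xs eps))) (E tn (xs eps))).
  assert (HF1 : conv0 F1 (0, 0)).
  { unfold F1; rewrite <- (drift_balance (E tn y) (b tn y)) by auto.
    apply conv0_vadd; [apply conv0_wedgeB | apply cont_vec_conv0];
      auto using stage1_conv0, cont_scal_lim0. }
  apply (conv0_stiff_rotation_solution (gamma * dt) (b th hy) (E th hy)
           (fun eps => vadd (vscale eps (vs eps)) (vscale ((1 - gamma) * dt) (F1 eps)))
           (fun eps => E th (vadd (xs eps) (vscale (dt / (2 * gamma * eps)) (v1 eps)))) _
           (fun eps => b th (vadd (xs eps) (vscale (dt / (2 * gamma * eps)) (v1 eps)))));
    auto using cont_vec_conv0, cont_scal_lim0, predictor_conv0.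
  - apply (conv0_eq _ (vadd (0, 0) (vscale ((1 - gamma) * dt) (0, 0)))).
    + apply conv0_vadd; [exact Hv | apply conv0_vscale; [apply lim0_const | exact HF1]].
    + unfold vadd, vscale; simpl; f_equal; ring.
  - intros eps Heps; destruct (Hstep eps Heps) as [_ [H2 _]].
    set (hx := vadd (xs eps) (vscale (dt / (2 * gamma * eps)) (v1 eps))) in *.
    rewrite (stiff_stage_rescale eps (gamma * dt) (v2 eps)
               (vadd (vs eps) (vscale ((1 - gamma) * dt / eps) (F1 eps)))
               (vadd (wedgeB (vscale (/ eps) (v2 eps)) (b th hx)) (E th hx))); [| exact Heps |].
    + unfold vadd, vscale; simpl; f_equal; field; lra.
    + rewrite H2 at 1; unfold F1, th, vadd, vscale; simpl; f_equal; field; lra.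
Qed.

Lemma scheme_step_conv0 :
  conv0 xs' (drift_step E b dt tn y) /\ conv0 (fun eps => vscale eps (vs' eps)) (0, 0).
Proof.
  pose proof gamma_pos; split.
  - apply (conv0_ext (fun eps => vadd (xs eps)
             (vadd (vscale ((1 - gamma) * dt) (vscale (/ eps) (v1 eps)))
                   (vscale (gamma * dt) (vscale (/ eps) (v2 eps)))))).
    + intros eps Heps; destruct (Hstep eps Heps) as [_ [_ [H3 _]]]; rewrite H3.
      unfold vadd, vscale; simpl; f_equal; field; lra.
    + apply conv0_vadd; [exact Hx |].
      apply conv0_vadd; apply conv0_vscale;
        auto using lim0_const, stage1_conv0, stage2_conv0.
  - apply (conv0_ext (fun eps => vscale (eps * eps) (vscale (/ eps) (v2 eps)))).
    + intros eps Heps; destruct (Hstep eps Heps) as [_ [_ [_ H4]]]; rewrite H4.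
      unfold vscale; simpl; f_equal; field; lra.
    + apply (conv0_eq _ (vscale (0 * 0) (Udrift E b th hy))).
      * apply conv0_vscale; [lim0_auto | exact stage2_conv0].
      * unfold vscale; simpl; f_equal; ring.
Qed.

End OneStep.

Lemma stage_choice (P : R -> vec -> vec -> Prop) :
  (forall eps, 0 < eps -> exists v1 v2, P eps v1 v2) ->
  exists V1 V2 : R -> vec, forall eps, 0 < eps -> P eps (V1 eps) (V2 eps).
Proof.
  intros HP.
  destruct (choice (fun eps (p : vec * vec) => 0 < eps -> P eps (fst p) (snd p))) as [f Hf].
  - intros eps; destruct (Rlt_dec 0 eps) as [Heps | Heps].
    + destruct (HP eps Heps) as [v1 [v2 H]]; now exists (v1, v2).
    + now exists ((0, 0), (0, 0)).
  - now exists (fun eps => fst (f eps)), (fun eps => snd (f eps)).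
Qed.

Theorem proposition3p3
  (E : R -> vec -> vec) (b : R -> vec -> R)
  (HE : cont_vec E) (Hb : cont_scal b)
  (Hbnz : forall t x, 0 <= t -> b t x <> 0)
  (dt T : R) (Hdt : 0 < dt) (HT : 0 < T)
  (x v : R -> nat -> vec) (y0 : vec)
  (Hscheme : forall eps n, 0 < eps -> (n < NT T dt)%nat ->
     exists v1 v2, scheme_step E b dt eps (INR n * dt)
       (x eps n) (v eps n) v1 v2 (x eps (S n)) (v eps (S n)))
  (Hbdd : forall n, (1 <= n <= NT T dt)%nat -> exists M, forall eps, 0 < eps ->
     vnorm (x eps n) <= M /\ vnorm (vscale eps (v eps n)) <= M)
  (Hx0 : conv0 (fun eps => x eps 0%nat) y0)
  (Hv0 : conv0 (fun eps => vscale eps (v eps 0%nat)) (0, 0)) :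
  forall n, (n <= NT T dt)%nat -> conv0 (fun eps => x eps n) (yseq E b dt y0 n).
Proof.
  enough (Hboth : forall n, (n <= NT T dt)%nat ->
            conv0 (fun eps => x eps n) (yseq E b dt y0 n) /\
            conv0 (fun eps => vscale eps (v eps n)) (0, 0)) by apply Hboth.
  induction n as [| n IH]; intros Hn; [now split |].
  destruct (IH ltac:(lia)) as [IHx IHv].
  destruct (stage_choice (fun eps v1 v2 => scheme_step E b dt eps (INR n * dt)
              (x eps n) (v eps n) v1 v2 (x eps (S n)) (v eps (S n)))) as [V1 [V2 HV]].
  { intros eps Heps; apply Hscheme; [exact Heps | lia]. }
  assert (Htn : 0 <= INR n * dt) by (pose proof (pos_INR n); nra).
  rewrite yseq_S.
  exact (scheme_step_conv0 E b dt (INR n * dt) _ (fun eps => x eps n) (fun eps => v eps n)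
           V1 V2 _ _ HE Hb Hbnz Hdt Htn IHx IHv HV).
Qed.
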